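(* Let $A\in\mathbb Z^{d\times n}$ with $\ker(A)\cap\mathbb N^n=\{0\}$ and let $B\subseteq\ker(A)$ be any subset. Then $B$ is distance reducing if and only if $B$ reduces the distance of the Graver basis $G(A)$. Similarly, $B$ is strongly distance reducing if and only if $B$ strongly reduces the distance of $G(A)$.
   Context: For $z\in\mathbb Z^n$, $z^\pm\in\mathbb N^n$ are the unique vectors with disjoint supports and $z=z^+-z^-$; $\|\cdot\|$ is the $1$-norm. The Graver basis $G(A)$ is the set of nonzero $z\in\ker(A)$ admitting no decomposition $z=u+v$ with $u,v\in\ker(A)\setminus\{0\}$, $z^+=u^++v^+$, $z^-=u^-+v^-$. For nonzero $z\in\ker(A)$ and $u\in\ker(A)$: $u$ reduces $z$ from $z^+$ if there is $\varepsilon\in\{\pm1\}$ with $z^++\varepsilon u\in\mathbb N^n$ and $\|z^++\varepsilon u-z^-\|<\|z\|$; $u$ reduces $z$ from $z^-$ if there is $\varepsilon$ with $z^-+\varepsilon u\in\mathbb N^n$ and $\|z^+-(z^-+\varepsilon u)\|<\|z\|$. $B$ reduces the distance of $Z$ if every nonzero $z\in Z$ is reduced (from $z^+$ or from $z^-$) by some $u\in B$; $B$ strongly reduces the distance of $Z$ if every nonzero $z\in Z$ is reduced from $z^+$ by some $u\in B$ and from $z^-$ by some (possibly different) $u'\in B$. $B$ is (strongly) distance reducing if it (strongly) reduces the distance of $\ker(A)$. *)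

From mathcomp Require Import all_boot all_order all_algebra.
Set Implicit Arguments. Unset Strict Implicit. Unset Printing Implicit Defensive.
Import Order.TTheory GRing.Theory Num.Theory.
Local Open Scope ring_scope.

Definition zpos n (z : 'cV[int]_n) : 'cV[int]_n := map_mx (fun x => Num.max x 0) z.
Definition zneg n (z : 'cV[int]_n) : 'cV[int]_n := map_mx (fun x => Num.max (- x) 0) z.

Definition norm1 n (z : 'cV[int]_n) : int := \sum_(i < n) `|z i 0|.

Definition is_nat_vec n (v : 'cV[int]_n) : Prop := forall i, 0 <= v i 0.

Definition inker d n (A : 'M[int]_(d, n)) (z : 'cV[int]_n) : Prop := A *m z = 0.

Definition graver d n (A : 'M[int]_(d, n)) (z : 'cV[int]_n) : Prop :=
  inker A z /\ z <> 0 /\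
      ~ (exists u v : 'cV[int]_n,
           inker A u /\ u <> 0 /\ inker A v /\ v <> 0 /\
           z = u + v /\ zpos z = zpos u + zpos v /\ zneg z = zneg u + zneg v).

Definition reduces_from_pos n (z u : 'cV[int]_n) : Prop :=
  exists eps : int, (eps = 1 \/ eps = -1) /\
    is_nat_vec (zpos z + eps *: u) /\
    norm1 (zpos z + eps *: u - zneg z) < norm1 z.

Definition reduces_from_neg n (z u : 'cV[int]_n) : Prop :=
  exists eps : int, (eps = 1 \/ eps = -1) /\
    is_nat_vec (zneg z + eps *: u) /\
    norm1 (zpos z - (zneg z + eps *: u)) < norm1 z.

Definition reduces_distance_of n (B Z : 'cV[int]_n -> Prop) : Prop :=
  forall z, Z z -> z <> 0 ->
    exists2 u, B u & (reduces_from_pos z u \/ reduces_from_neg z u).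

Definition strongly_reduces_distance_of n (B Z : 'cV[int]_n -> Prop) : Prop :=
  forall z, Z z -> z <> 0 ->
    (exists2 u, B u & reduces_from_pos z u) /\
    (exists2 u', B u' & reduces_from_neg z u').

Definition distance_reducing d n (A : 'M[int]_(d, n)) (B : 'cV[int]_n -> Prop) : Prop :=
  reduces_distance_of B (inker A).

Definition strongly_distance_reducing d n (A : 'M[int]_(d, n)) (B : 'cV[int]_n -> Prop) : Prop :=
  strongly_reduces_distance_of B (inker A).

From mathcomp Require Import all_boot all_order all_algebra.
From mathcomp Require Import zify.
From Stdlib Require Import Classical.
Set Implicit Arguments. Unset Strict Implicit. Unset Printing Implicit Defensive.
Import Order.TTheory GRing.Theory Num.Theory.
Local Open Scope ring_scope.

(* Every nonzero z in ker(A) dominates some Graver element g in the conformal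
   order (g and z agree in sign and |g_i| <= |z_i| for all i): if z is not in
   G(A), a conformal splitting z = u + v gives a shorter kernel element below z.
   Reducing g then reduces z as well: for g ⊑ z we have
   z^+ + eps u = (z^+ - g^+) + (g^+ + eps u) >= 0 and
   ||z + eps u|| <= ||z - g|| + ||g + eps u|| < ||z - g|| + ||g|| = ||z||,
   and the case of z^- is the case of z^+ for -z. *)

Definition conformal n (g z : 'cV[int]_n) : Prop :=
  forall i, (0 <= g i 0 <= z i 0) \/ (z i 0 <= g i 0 <= 0).

Lemma conformal_refl n (z : 'cV[int]_n) : conformal z z.
Proof. by move=> i; lia. Qed.

Lemma conformal_trans n (a b c : 'cV[int]_n) :
  conformal a b -> conformal b c -> conformal a c.
Proof. by move=> ab bc i; move: (ab i) (bc i); lia. Qed.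

Lemma conformalN n (g z : 'cV[int]_n) : conformal g z -> conformal (- g) (- z).
Proof. by move=> gz i; move: (gz i); rewrite !mxE /=; lia. Qed.

Lemma zposN n (z : 'cV[int]_n) : zpos (- z) = zneg z.
Proof. by apply/matrixP => i j; rewrite !mxE. Qed.

Lemma znegN n (z : 'cV[int]_n) : zneg (- z) = zpos z.
Proof. by apply/matrixP => i j; rewrite !mxE opprK. Qed.

Lemma zpos_addr_subr_zneg n (z w : 'cV[int]_n) : zpos z + w - zneg z = z + w.
Proof. by apply/matrixP => i j; rewrite !mxE /=; lia. Qed.

Lemma conformal_zpos_subr n (g z : 'cV[int]_n) :
  conformal g z -> is_nat_vec (zpos z - zpos g).
Proof. by move=> gz i; move: (gz i); rewrite !mxE /=; lia. Qed.

Lemma is_nat_vecD n (a b : 'cV[int]_n) :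
  is_nat_vec a -> is_nat_vec b -> is_nat_vec (a + b).
Proof. by move=> a0 b0 i; rewrite mxE addr_ge0. Qed.

Lemma norm1N n (z : 'cV[int]_n) : norm1 (- z) = norm1 z.
Proof. by apply: eq_bigr => i _; rewrite mxE normrN. Qed.

Lemma norm1D n (a b : 'cV[int]_n) : norm1 (a + b) <= norm1 a + norm1 b.
Proof. by rewrite -big_split; apply: ler_sum => i _; rewrite mxE ler_normD. Qed.

Lemma norm1_eq0 n (z : 'cV[int]_n) : norm1 z = 0 -> z = 0.
Proof.
move=> /psumr_eq0P z0; apply/matrixP => i j.
by rewrite ord1 mxE; apply: normr0_eq0; apply: z0.
Qed.

Lemma norm1_gt0 n (z : 'cV[int]_n) : z <> 0 -> 0 < norm1 z.
Proof.
move=> nz; rewrite lt_def sumr_ge0 // andbT.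
by apply/eqP => /norm1_eq0.
Qed.

Lemma norm1_conformal n (g z : 'cV[int]_n) :
  conformal g z -> norm1 z = norm1 (z - g) + norm1 g.
Proof.
move=> gz; rewrite -big_split; apply: eq_bigr => i _ /=.
by move: (gz i); rewrite !mxE /=; lia.
Qed.

Lemma conformal_sum n (u v : 'cV[int]_n) :
  zpos (u + v) = zpos u + zpos v -> zneg (u + v) = zneg u + zneg v ->
  conformal u (u + v).
Proof.
move=> /matrixP Ep /matrixP En i.
by move: (Ep i 0) (En i 0); rewrite !mxE /=; lia.
Qed.

Section GraverConformal.

Variables (d n : nat) (A : 'M[int]_(d, n)).

Lemma not_graver_conformal_lt (z : 'cV[int]_n) : inker A z -> z <> 0 ->
  ~ graver A z ->
  exists u, [/\ inker A u, u <> 0, conformal u z & norm1 u < norm1 z].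
Proof.
move=> Az nz notG.
have [u [v [Au [nu [_ [nv [-> [Ep En]]]]]]]] :
    exists u v : 'cV[int]_n, inker A u /\ u <> 0 /\ inker A v /\ v <> 0 /\
      z = u + v /\ zpos z = zpos u + zpos v /\ zneg z = zneg u + zneg v.
  by apply: NNPP => split_z; apply: notG.
have uz := conformal_sum Ep En.
exists u; split=> //.
by rewrite (norm1_conformal uz) [u + v]addrC addrK ltrDr norm1_gt0.
Qed.

Lemma graver_conformal (z : 'cV[int]_n) : inker A z -> z <> 0 ->
  exists2 g, graver A g & conformal g z.
Proof.
have [k] := ubnP `|norm1 z|%N; elim: k z => // k IHk z lt_zk Az nz.
case: (classic (graver A z)) => [Gz | notG].
  by exists z => //; apply: conformal_refl.
have [u [Au nu uz lt_uz]] := not_graver_conformal_lt Az nz notG.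
have [|g Gg gu] := IHk u _ Au nu.
  by move: lt_zk lt_uz (norm1_gt0 nu); lia.
by exists g => //; apply: conformal_trans gu uz.
Qed.

End GraverConformal.

Lemma reduces_from_negE n (z u : 'cV[int]_n) :
  reduces_from_neg z u <-> reduces_from_pos (- z) u.
Proof.
rewrite /reduces_from_neg /reduces_from_pos zposN znegN norm1N.
have normE e : norm1 (zpos z - (zneg z + e *: u)) = norm1 (zneg z + e *: u - zpos z).
  by rewrite -norm1N opprB.
by split=> -[e [e1 [nat_e lt_e]]]; exists e; rewrite ?normE in lt_e *.
Qed.

Lemma reduces_from_pos_conformal n (g z u : 'cV[int]_n) :
  conformal g z -> reduces_from_pos g u -> reduces_from_pos z u.
Proof.
move=> gz [e [e1 [nat_g lt_g]]]; exists e; split=> //.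
have splitE : zpos z + e *: u = (zpos z - zpos g) + (zpos g + e *: u).
  by rewrite addrA subrK.
split; first by rewrite splitE; apply: is_nat_vecD nat_g; apply: conformal_zpos_subr.
rewrite !zpos_addr_subr_zneg in lt_g *.
have -> : z + e *: u = (z - g) + (g + e *: u) by rewrite addrA subrK.
by rewrite (norm1_conformal gz); apply: le_lt_trans (norm1D _ _) _; rewrite ltrD2l.
Qed.

Lemma reduces_from_neg_conformal n (g z u : 'cV[int]_n) :
  conformal g z -> reduces_from_neg g u -> reduces_from_neg z u.
Proof.
rewrite !reduces_from_negE => gz.
exact/reduces_from_pos_conformal/conformalN.
Qed.

Theorem theorem7p4 (d n : nat) (A : 'M[int]_(d, n)) (B : 'cV[int]_n -> Prop) :
  (forall z : 'cV[int]_n, inker A z -> is_nat_vec z -> z = 0) ->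
  (forall u, B u -> inker A u) ->
  (distance_reducing A B <-> reduces_distance_of B (graver A)) /\
  (strongly_distance_reducing A B <-> strongly_reduces_distance_of B (graver A)).
Proof.
move=> _ _; split; split.
- by move=> redB z [Az _]; apply: redB.
- move=> redB z Az nz; have [g Gg gz] := graver_conformal Az nz.
  have [u Bu red_g] := redB g Gg (proj1 (proj2 Gg)).
  exists u => //; case: red_g => red_g.
  + by left; apply: reduces_from_pos_conformal red_g.
  + by right; apply: reduces_from_neg_conformal red_g.
- by move=> redB z [Az _]; apply: redB.
- move=> redB z Az nz; have [g Gg gz] := graver_conformal Az nz.
  have [[u Bu red_pos] [u' Bu' red_neg]] := redB g Gg (proj1 (proj2 Gg)).
  split; [exists u | exists u'] => //.
  + exact: reduces_from_pos_conformal red_pos.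
  + exact: reduces_from_neg_conformal red_neg.
Qed.
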